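(* Let $\eta>0$, $\omega\in(0,1)$, $S\ge2$ an integer, and $x\in\mathbb R^d$. Let $C(x)$ denote the number of bits used by the ANQ (with bias $\eta$, compression rate $\omega$, and constellation of $S+1$ symbols) to quantize $x$ componentwise and encode the $d$ resulting indices. Then: (i) for the deterministic ANQ, $$C(x)\le3d\log_2(S+1)+d\log_2(S+1)\log_S\Big(2+\frac{\ln(1-\omega)+\ln\big(1+\frac{\omega\|x\|_2}{\sqrt d\,\eta}\big)}{\ln(1+\omega)-\ln(1-\omega)}\Big);$$ (ii) for the probabilistic ANQ, almost surely, $$C(x)\le3d\log_2(S+1)+d\log_2(S+1)\log_S\Big(2+\frac{\ln\big(1+\frac{\omega\|x\|_2}{\sqrt d\,\eta}\big)}{2\ln\big(\sqrt{1+\omega^2}+\omega\big)}\Big).$$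
   Context: ANQ (Adaptive encoding Non-uniform Quantizer) with parameters $\eta>0$, $\omega\in(0,1)$, applied componentwise to vectors in $\mathbb R^d$. Deterministic ANQ: scalar points $q_\ell=-q_{-\ell}=\frac{\eta}{\omega}[(\frac{1+\omega}{1-\omega})^\ell-1]$ ($\ell\ge0$); a scalar $x$ is mapped to index $\ell(x)=\mathrm{sign}(x)\lceil\frac{\ln(1-\omega)+\ln(1+\omega|x|/\eta)}{\ln(1+\omega)-\ln(1-\omega)}\rceil$ and value $q_{\ell(x)}$. Probabilistic ANQ: scalar points $q_\ell=-q_{-\ell}=\frac{\eta}{\omega}[(\sqrt{1+\omega^2}+\omega)^{2\ell}-1]$ ($\ell\ge0$); for $x\ge0$ let $\ell=\lceil\frac{\ln(1+\omega x/\eta)}{2\ln(\sqrt{1+\omega^2}+\omega)}\rceil$ and output index $\ell-1$ with probability $\frac{q_\ell-x}{q_\ell-q_{\ell-1}}$, index $\ell$ with probability $\frac{x-q_{\ell-1}}{q_\ell-q_{\ell-1}}$ (index $0$ for $x=0$); for $x<0$ use the negated index of $-x$. Encoding: symbols from $\{0,1,\dots,S\}$, each costing $\log_2(S+1)$ bits. Let $\tilde{\mathcal L}_{-1}=\emptyset$ and for $b\ge0$, $\tilde{\mathcal L}_b=\{-\lceil\frac{S^{b+1}-1}{2(S-1)}\rceil+1,\dots,\lfloor\frac{S^{b+1}-1}{2(S-1)}\rfloor\}$, $\mathcal L_b=\tilde{\mathcal L}_b\setminus\tilde{\mathcal L}_{b-1}$ (these partition $\mathbb Z$ and $|\mathcal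 L_b|=S^b$). An index $\ell\in\mathcal L_b$ is encoded by a unique string of $b$ symbols from $\{1,\dots,S\}$ followed by the symbol $0$, i.e., with $(b+1)\log_2(S+1)$ bits. The cost $C(x)$ of a vector is the sum of the costs of its $d$ component indices. *)

From Stdlib Require Import Reals ZArith List.
Open Scope R_scope.

Definition Rfloor (y : R) : Z := (up y - 1)%Z.        (* largest integer <= y *)
Definition Rceil (y : R) : Z := (- Rfloor (- y))%Z.

Definition log2 (y : R) : R := ln y / ln 2.
Definition logb (b y : R) : R := ln y / ln b.

Definition sumd (d : nat) (f : nat -> R) : R :=
  fold_right Rplus 0 (map f (seq 0 d)).

Definition norm2 (d : nat) (x : nat -> R) : R := sqrt (sumd d (fun i => x i ^ 2)).

Definition sgnZ (x : R) : Z :=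
  match Rlt_dec 0 x with
  | left _ => 1%Z
  | right _ => match Rlt_dec x 0 with left _ => (-1)%Z | right _ => 0%Z end
  end.

Definition det_index (eta w x : R) : Z :=
  (sgnZ x * Rceil ((ln (1 - w) + ln (1 + w * Rabs x / eta)) /
                   (ln (1 + w) - ln (1 - w))))%Z.

Definition pq (eta w : R) (l : nat) : R :=
  eta / w * ((sqrt (1 + w ^ 2) + w) ^ (2 * l) - 1).

Definition prob_level (eta w a : R) : Z :=
  Rceil (ln (1 + w * a / eta) / (2 * ln (sqrt (1 + w ^ 2) + w))).

Definition prob_pos (eta w a : R) (k : Z) : R :=
  if Req_EM_T a 0 then (if Z.eq_dec k 0 then 1 else 0)
  else
    let l := prob_level eta w a in
    let ql := pq eta w (Z.to_nat l) in
    let ql1 := pq eta w (Z.to_nat (l - 1)) in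
    if Z.eq_dec k (l - 1) then (ql - a) / (ql - ql1)
    else if Z.eq_dec k l then (a - ql1) / (ql - ql1)
    else 0.

(* probability that the probabilistic ANQ maps the scalar x to index k *)
Definition prob_index (eta w x : R) (k : Z) : R :=
  if Rlt_dec x 0 then prob_pos eta w (- x) (- k) else prob_pos eta w x k.

Definition in_Ltilde (S : Z) (b : nat) (l : Z) : bool :=
  let N := (S ^ (Z.of_nat b + 1) - 1)%Z in
  let D := (2 * (S - 1))%Z in
  let fl := (N / D)%Z in
  let cl := (- ((- N) / D))%Z in
  Z.leb (- cl + 1) l && Z.leb l fl.

Fixpoint level_aux (S : Z) (fuel b : nat) (l : Z) : nat :=
  match fuel with
  | O => b
  | Datatypes.S f => if in_Ltilde S b l then b else level_aux S f (Datatypes.S b) l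
  end.

(* the unique b with l \in L_b, i.e. the least b with l \in tilde L_b
   (the search bound 2|l|+1 suffices for S >= 2) *)
Definition level (S : Z) (l : Z) : nat :=
  level_aux S (Datatypes.S (Z.to_nat (2 * Z.abs l))) 0 l.

Definition index_cost (S : Z) (l : Z) : R :=
  INR (Datatypes.S (level S l)) * log2 (IZR S + 1).

Definition vec_cost (S : Z) (d : nat) (ks : nat -> Z) : R :=
  sumd d (fun i => index_cost S (ks i)).

Definition det_cost (eta w : R) (S : Z) (d : nat) (x : nat -> R) : R :=
  vec_cost S d (fun i => det_index eta w (x i)).

(* Index l of the encoding belongs to the class L_b with b <= 1 + log_S(|l| + 1), so it
   costs at most (3 + log_S(|l| + 1)) log2(S+1) bits (index_cost_le).  For both ANQ
   variants a quantized index satisfies |l| + 1 <= c + a ln(1 + b |x_i|) for explicit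
   constants c > 0, a, b >= 0 (det_index_envelope, prob_index_envelope); we call the
   right-hand side the envelope of x_i.  Summing over the d components, the only
   non-trivial step is bounding sum_i ln(envelope(|x_i|)) by d ln(envelope(m)) with
   m = ||x||_2 / sqrt d.  This follows from concavity of ln (tangent line bound, used in
   the form of a finite Jensen inequality twice) together with the Cauchy-Schwarz bound
   sum_i |x_i| <= sqrt d ||x||_2 (sumd_ln_envelope_le). *)
From Stdlib Require Import Reals ZArith List Lia Lra.
Open Scope R_scope.

Lemma Rdiv_le_0_compat (a b : R) : 0 <= a -> 0 < b -> 0 <= a / b.
Proof. intros Ha Hb. apply Rmult_le_pos; [exact Ha | left; now apply Rinv_0_lt_compat]. Qed.

Lemma fold_right_Rplus_init (l : list R) (a : R) :
  fold_right Rplus a l = fold_right Rplus 0 l + a.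
Proof. induction l as [|y l IH]; simpl; [lra | rewrite IH; lra]. Qed.

Lemma sumd_S (d : nat) (f : nat -> R) : sumd (S d) f = sumd d f + f d.
Proof.
  unfold sumd. rewrite seq_S, map_app, fold_right_app. simpl.
  rewrite fold_right_Rplus_init. lra.
Qed.

Lemma sumd_ext (d : nat) (f g : nat -> R) :
  (forall i, f i = g i) -> sumd d f = sumd d g.
Proof.
  intros Hfg. induction d as [|d IH]; [reflexivity | now rewrite !sumd_S, IH, Hfg].
Qed.

Lemma sumd_le (d : nat) (f g : nat -> R) :
  (forall i, (i < d)%nat -> f i <= g i) -> sumd d f <= sumd d g.
Proof.
  induction d as [|d IH]; intros Hfg; [unfold sumd; simpl; lra|].
  rewrite !sumd_S.
  assert (sumd d f <= sumd d g) by (apply IH; intros; apply Hfg; lia).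
  assert (f d <= g d) by (apply Hfg; lia). lra.
Qed.

Lemma sumd_nonneg (d : nat) (f : nat -> R) :
  (forall i, (i < d)%nat -> 0 <= f i) -> 0 <= sumd d f.
Proof.
  intros Hf. apply Rle_trans with (sumd d (fun _ => 0)); [|now apply sumd_le].
  clear Hf. induction d as [|d IH]; [unfold sumd; simpl; lra | rewrite sumd_S; lra].
Qed.

Lemma sumd_affine (d : nat) (f : nat -> R) (a b : R) :
  sumd d (fun i => a + b * f i) = INR d * a + b * sumd d f.
Proof.
  induction d as [|d IH]; [unfold sumd; simpl; lra|].
  rewrite !sumd_S, IH, S_INR. ring.
Qed.

Lemma sumd_square_dev (d : nat) (f : nat -> R) (m : R) :
  sumd d (fun i => (f i - m) ^ 2) = sumd d (fun i => f i ^ 2) - 2 * m * sumd d f + INR d * m ^ 2.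
Proof.
  induction d as [|d IH]; [unfold sumd; simpl; lra|].
  rewrite !sumd_S, IH, S_INR. ring.
Qed.

Lemma sumd_abs_le_norm2 (d : nat) (x : nat -> R) :
  (0 < d)%nat -> sumd d (fun i => Rabs (x i)) <= sqrt (INR d) * norm2 d x.
Proof.
  intros Hd. unfold norm2.
  set (s := sumd d (fun i => Rabs (x i))).
  set (Q := sumd d (fun i => x i ^ 2)).
  assert (HdR : 0 < INR d) by (apply lt_0_INR; lia).
  assert (Hs : 0 <= s) by (apply sumd_nonneg; intros; apply Rabs_pos).
  assert (HQ : 0 <= Q) by (apply sumd_nonneg; intros; apply pow2_ge_0).
  assert (Hsq : sumd d (fun i => Rabs (x i) ^ 2) = Q)
    by (apply sumd_ext; intros i; apply pow2_abs).
  assert (Hvar : 0 <= Q - s * s / INR d).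
  { pose proof (sumd_nonneg d (fun i => (Rabs (x i) - s / INR d) ^ 2)
                  (fun i _ => pow2_ge_0 _)) as H.
    rewrite sumd_square_dev, Hsq in H. fold s in H.
    replace (Q - s * s / INR d) with (Q - 2 * (s / INR d) * s + INR d * (s / INR d) ^ 2)
      by (field; lra). exact H. }
  assert (Hss : s * s <= INR d * Q).
  { apply Rmult_le_reg_r with (/ INR d); [now apply Rinv_0_lt_compat|].
    replace (INR d * Q * / INR d) with Q by (field; lra). unfold Rdiv in Hvar. lra. }
  rewrite <- sqrt_mult by lra.
  rewrite <- (sqrt_square s) by lra. apply sqrt_le_1; nra.
Qed.

Lemma ln_le (x y : R) : 0 < x -> x <= y -> ln x <= ln y.
Proof. intros Hx [Hxy | ->]; [left; now apply ln_increasing | lra]. Qed.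

Lemma ln_nonneg (x : R) : 1 <= x -> 0 <= ln x.
Proof. intros Hx. rewrite <- ln_1. apply ln_le; lra. Qed.

Lemma ln_pos (x : R) : 1 < x -> 0 < ln x.
Proof. intros Hx. rewrite <- ln_1. apply ln_increasing; lra. Qed.

Lemma ln_tangent (z Z : R) : 0 < z -> 0 < Z -> ln z <= ln Z + z / Z - 1.
Proof.
  intros Hz HZ.
  assert (Hq : 0 < z / Z) by (now apply Rdiv_lt_0_compat).
  pose proof (exp_ineq1_le (ln (z / Z))) as H. rewrite exp_ln in H by exact Hq.
  unfold Rdiv in H. rewrite ln_mult, ln_Rinv in H by (try apply Rinv_0_lt_compat; lra).
  unfold Rdiv. lra.
Qed.

Lemma sumd_ln_le (d : nat) (z : nat -> R) (Z : R) :
  (forall i, (i < d)%nat -> 0 < z i) -> 0 < Z -> sumd d z <= INR d * Z ->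
  sumd d (fun i => ln (z i)) <= INR d * ln Z.
Proof.
  intros Hz HZ Hsum.
  apply Rle_trans with (sumd d (fun i => (ln Z - 1) + / Z * z i)).
  - apply sumd_le. intros i Hi. pose proof (ln_tangent (z i) Z (Hz i Hi) HZ). unfold Rdiv in *. lra.
  - rewrite sumd_affine.
    assert (/ Z * sumd d z <= INR d).
    { apply Rmult_le_reg_l with Z; [exact HZ|].
      rewrite <- Rmult_assoc, Rinv_r by lra. lra. }
    lra.
Qed.

(* The envelope c + a ln(1 + b t) bounding |index| + 1 in terms of the input magnitude t. *)
Definition envelope (c a b t : R) : R := c + a * ln (1 + b * t).

Lemma envelope_pos (c a b t : R) : 0 < c -> 0 <= a -> 0 <= b -> 0 <= t -> 0 < envelope c a b t.
Proof.
  intros Hc Ha Hb Ht. unfold envelope.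
  pose proof (ln_nonneg (1 + b * t) ltac:(nra)). nra.
Qed.

(* Concavity of t |-> ln(envelope t), combined with Cauchy-Schwarz: the components' log
   envelopes sum to at most d times the log envelope at the quadratic mean of |x_i|. *)
Lemma sumd_ln_envelope_le (d : nat) (x : nat -> R) (c a b : R) :
  (0 < d)%nat -> 0 < c -> 0 <= a -> 0 <= b ->
  sumd d (fun i => ln (envelope c a b (Rabs (x i))))
  <= INR d * ln (envelope c a b (norm2 d x / sqrt (INR d))).
Proof.
  intros Hd Hc Ha Hb.
  assert (Hsd : 0 < sqrt (INR d)) by (apply sqrt_lt_R0, lt_0_INR; lia).
  set (m := norm2 d x / sqrt (INR d)).
  assert (Hm : 0 <= m) by (apply Rmult_le_pos; [apply sqrt_pos | left; now apply Rinv_0_lt_compat]).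
  assert (Hmean : sumd d (fun i => Rabs (x i)) <= INR d * m).
  { unfold m. replace (INR d * (norm2 d x / sqrt (INR d))) with (sqrt (INR d) * norm2 d x).
    - now apply sumd_abs_le_norm2.
    - rewrite <- (sqrt_sqrt (INR d)) at 2 by (apply pos_INR). field. lra. }
  assert (Hinner : sumd d (fun i => ln (1 + b * Rabs (x i))) <= INR d * ln (1 + b * m)).
  { apply sumd_ln_le.
    - intros i _. pose proof (Rabs_pos (x i)). nra.
    - nra.
    - rewrite sumd_affine. pose proof (pos_INR d). nra. }
  apply sumd_ln_le.
  - intros i _. apply envelope_pos; auto using Rabs_pos.
  - now apply envelope_pos.
  - unfold envelope. rewrite sumd_affine. nra.
Qed.

Lemma Rceil_ge (y : R) : y <= IZR (Rceil y).
Proof. unfold Rceil, Rfloor. rewrite opp_IZR, minus_IZR. destruct (archimed (- y)). lra. Qed.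

Lemma Rceil_lt (y : R) : IZR (Rceil y) < y + 1.
Proof. unfold Rceil, Rfloor. rewrite opp_IZR, minus_IZR. destruct (archimed (- y)). lra. Qed.

Lemma Rceil_abs_lt (y : R) : -1 < y -> IZR (Z.abs (Rceil y)) + 1 < y + 2.
Proof.
  intros Hy. pose proof (Rceil_ge y) as Hge. pose proof (Rceil_lt y) as Hlt.
  assert (Hnat : (-1 < Rceil y)%Z) by (apply lt_IZR; lra).
  rewrite Z.abs_eq by lia. lra.
Qed.

(* Some power B^j dominates y with exponent j < log_B y + 1 (take j = ceil(log_B y)). *)
Lemma pow_above_logb (B y : R) :
  1 < B -> 1 <= y -> exists j : nat, y <= B ^ j /\ INR j < logb B y + 1.
Proof.
  intros HB Hy.
  set (u := logb B y).
  assert (HlB : 0 < ln B) by now apply ln_pos.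
  assert (Hu : 0 <= u) by (apply Rdiv_le_0_compat; [now apply ln_nonneg | exact HlB]).
  pose proof (Rceil_ge u) as Hge. pose proof (Rceil_lt u) as Hlt.
  assert (H0 : (0 <= Rceil u)%Z) by (apply le_IZR; lra).
  exists (Z.to_nat (Rceil u)).
  rewrite INR_IZR_INZ, Z2Nat.id by exact H0. split; [|lra].
  destruct (Rle_lt_dec y (B ^ Z.to_nat (Rceil u))) as [Hle | Hgt]; [exact Hle|].
  exfalso.
  assert (Hln : ln (B ^ Z.to_nat (Rceil u)) < ln y)
    by (apply ln_increasing; [apply pow_lt; lra | exact Hgt]).
  rewrite ln_pow, INR_IZR_INZ, Z2Nat.id in Hln by (exact H0 || lra).
  assert (ln y = u * ln B) by (unfold u, logb; field; lra).
  nra.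
Qed.

Lemma level_aux_le (S : Z) (fuel b0 b : nat) (l : Z) :
  (b0 <= b)%nat -> in_Ltilde S b l = true -> (level_aux S fuel b0 l <= b)%nat.
Proof.
  revert b0. induction fuel as [|fuel IH]; intros b0 Hb Hin; simpl; [exact Hb|].
  destruct (in_Ltilde S b0 l) eqn:E; [exact Hb|].
  apply IH; [|exact Hin]. destruct (Nat.eq_dec b0 b); [subst; congruence | lia].
Qed.

Lemma level_le (S : Z) (b : nat) (l : Z) : in_Ltilde S b l = true -> (level S l <= b)%nat.
Proof. intros Hin. apply level_aux_le; [lia | exact Hin]. Qed.

Lemma in_Ltilde_of_pow (S : Z) (j : nat) (l : Z) :
  (2 <= S)%Z -> (Z.abs l + 1 <= S ^ Z.of_nat j)%Z -> in_Ltilde S (Datatypes.S j) l = true.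
Proof.
  intros HS Hl. unfold in_Ltilde.
  replace (Z.of_nat (Datatypes.S j) + 1)%Z with (Z.of_nat j + 2)%Z by lia.
  rewrite Z.pow_add_r by lia. set (P := (S ^ Z.of_nat j)%Z) in *.
  assert (Hup : (Z.abs l + 1 <= (P * S ^ 2 - 1) / (2 * (S - 1)))%Z)
    by (apply Z.div_le_lower_bound; [lia | nia]).
  assert (Hlo : ((- (P * S ^ 2 - 1)) / (2 * (S - 1)) <= - Z.abs l - 1)%Z)
    by (apply Z.div_le_upper_bound; [lia | nia]).
  apply andb_true_intro; split; apply Z.leb_le; lia.
Qed.

Lemma index_cost_le (S : Z) (l : Z) (y : R) :
  (2 <= S)%Z -> IZR (Z.abs l) + 1 <= y ->
  index_cost S l <= (3 + logb (IZR S) y) * log2 (IZR S + 1).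
Proof.
  intros HS Hy.
  assert (HSr : 2 <= IZR S) by now apply IZR_le.
  assert (Habs : 0 <= IZR (Z.abs l)) by (apply IZR_le; lia).
  assert (HL : 0 < log2 (IZR S + 1)) by (apply Rdiv_lt_0_compat; apply ln_pos; lra).
  destruct (pow_above_logb (IZR S) (IZR (Z.abs l) + 1)) as [j [Hpow Hj]]; [lra | lra |].
  assert (Hlev : (level S l <= Datatypes.S j)%nat).
  { apply level_le, in_Ltilde_of_pow; [exact HS|].
    apply le_IZR. rewrite plus_IZR, <- pow_IZR. exact Hpow. }
  assert (Hmono : logb (IZR S) (IZR (Z.abs l) + 1) <= logb (IZR S) y).
  { apply Rmult_le_compat_r; [left; apply Rinv_0_lt_compat, ln_pos; lra |].
    apply ln_le; lra. }
  unfold index_cost. apply Rmult_le_compat_r; [lra|].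
  apply Rle_trans with (INR (Datatypes.S (Datatypes.S j))); [apply le_INR; lia|].
  rewrite !S_INR. lra.
Qed.

Lemma vec_cost_le (S : Z) (d : nat) (ks : nat -> Z) (x : nat -> R) (c a b : R) :
  (2 <= S)%Z -> (0 < d)%nat -> 0 < c -> 0 <= a -> 0 <= b ->
  (forall i, (i < d)%nat -> IZR (Z.abs (ks i)) + 1 <= envelope c a b (Rabs (x i))) ->
  vec_cost S d ks <=
    3 * INR d * log2 (IZR S + 1)
    + INR d * log2 (IZR S + 1) * logb (IZR S) (envelope c a b (norm2 d x / sqrt (INR d))).
Proof.
  intros HS Hd Hc Ha Hb Hks.
  assert (HSr : 2 <= IZR S) by now apply IZR_le.
  assert (HlS : 0 < ln (IZR S)) by (apply ln_pos; lra).
  assert (HL : 0 < log2 (IZR S + 1)) by (apply Rdiv_lt_0_compat; apply ln_pos; lra).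
  set (L := log2 (IZR S + 1)) in *.
  unfold vec_cost.
  apply Rle_trans with
    (sumd d (fun i => 3 * L + L / ln (IZR S) * ln (envelope c a b (Rabs (x i))))).
  - apply sumd_le. intros i Hi.
    apply Rle_trans with (1 := index_cost_le S (ks i) _ HS (Hks i Hi)).
    right. unfold logb, L. field. lra.
  - rewrite sumd_affine.
    pose proof (sumd_ln_envelope_le d x c a b Hd Hc Ha Hb) as Hjensen.
    assert (HLS : 0 <= L / ln (IZR S)) by (apply Rdiv_le_0_compat; lra).
    apply Rle_trans with
      (INR d * (3 * L) + L / ln (IZR S) * (INR d * ln (envelope c a b (norm2 d x / sqrt (INR d))))).
    + apply Rplus_le_compat_l, Rmult_le_compat_l; assumption.
    + right. unfold logb. field. lra.
Qed.

Lemma det_growth_pos (w : R) : 0 < w < 1 -> 0 < ln (1 + w) - ln (1 - w).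
Proof. intros Hw. assert (ln (1 - w) < ln (1 + w)) by (apply ln_increasing; lra). lra. Qed.

(* The constant term of the deterministic envelope is positive, since ln(1+w) > 0. *)
Lemma det_offset_pos (w : R) :
  0 < w < 1 -> -1 < ln (1 - w) / (ln (1 + w) - ln (1 - w)).
Proof.
  intros Hw. pose proof (det_growth_pos w Hw) as HD. pose proof (ln_pos (1 + w) ltac:(lra)).
  apply Rmult_lt_reg_r with (ln (1 + w) - ln (1 - w)); [exact HD|].
  unfold Rdiv. rewrite Rmult_assoc, Rinv_l by lra. lra.
Qed.

Lemma det_index_envelope (eta w xi : R) :
  0 < eta -> 0 < w < 1 ->
  IZR (Z.abs (det_index eta w xi)) + 1 <=
  envelope (2 + ln (1 - w) / (ln (1 + w) - ln (1 - w))) (/ (ln (1 + w) - ln (1 - w)))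
           (w / eta) (Rabs xi).
Proof.
  intros Heta Hw.
  pose proof (det_growth_pos w Hw) as HD. pose proof (det_offset_pos w Hw) as Hoff.
  set (D := ln (1 + w) - ln (1 - w)) in *.
  set (A := (ln (1 - w) + ln (1 + w * Rabs xi / eta)) / D).
  assert (HA : A = ln (1 - w) / D + / D * ln (1 + w / eta * Rabs xi)).
  { unfold A. replace (w * Rabs xi / eta) with (w / eta * Rabs xi) by (field; lra). field. lra. }
  assert (Hgrow : 0 <= / D * ln (1 + w / eta * Rabs xi)).
  { apply Rmult_le_pos; [left; now apply Rinv_0_lt_compat|].
    apply ln_nonneg. pose proof (Rabs_pos xi).
    assert (0 <= w / eta) by (apply Rdiv_le_0_compat; lra). nra. }
  assert (Hceil : IZR (Z.abs (Rceil A)) + 1 < A + 2) by (apply Rceil_abs_lt; lra).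
  assert (Hsgn : (Z.abs (det_index eta w xi) <= Z.abs (Rceil A))%Z).
  { unfold det_index, sgnZ. fold D. fold A.
    destruct (Rlt_dec 0 xi); [|destruct (Rlt_dec xi 0)]; lia. }
  apply IZR_le in Hsgn. unfold envelope. lra.
Qed.

Lemma prob_growth_pos (w : R) : 0 < w -> 0 < ln (sqrt (1 + w ^ 2) + w).
Proof.
  intros Hw. apply ln_pos.
  assert (1 <= sqrt (1 + w ^ 2)) by (rewrite <- sqrt_1 at 1; apply sqrt_le_1_alt; nra). lra.
Qed.

Lemma prob_pos_envelope (eta w a : R) (k : Z) :
  0 < eta -> 0 < w -> 0 <= a -> 0 < prob_pos eta w a k ->
  IZR (Z.abs k) + 1 <= envelope 2 (/ (2 * ln (sqrt (1 + w ^ 2) + w))) (w / eta) a.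
Proof.
  intros Heta Hw Ha Hp.
  pose proof (prob_growth_pos w Hw) as Hq.
  assert (Hb : 0 <= w / eta * a) by (apply Rmult_le_pos; [apply Rdiv_le_0_compat|]; lra).
  assert (Hgrow : 0 <= / (2 * ln (sqrt (1 + w ^ 2) + w)) * ln (1 + w / eta * a)).
  { apply Rmult_le_pos; [left; apply Rinv_0_lt_compat; lra | apply ln_nonneg; lra]. }
  unfold envelope. unfold prob_pos in Hp.
  destruct (Req_EM_T a 0) as [_ | Ha_nz].
  - destruct (Z.eq_dec k 0) as [-> | _]; [change (Z.abs 0) with 0%Z; lra | lra].
  - cbv zeta in Hp. unfold prob_level in Hp.
    set (P := ln (1 + w * a / eta) / (2 * ln (sqrt (1 + w ^ 2) + w))) in Hp.
    assert (HP : P = / (2 * ln (sqrt (1 + w ^ 2) + w)) * ln (1 + w / eta * a)).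
    { unfold P. replace (w * a / eta) with (w / eta * a) by (field; lra). field. lra. }
    assert (Hceil : IZR (Z.abs (Rceil P)) + 1 < P + 2) by (apply Rceil_abs_lt; lra).
    pose proof (Rceil_ge P) as Hge.
    destruct (Z.eq_dec k (Rceil P - 1)) as [-> | _].
    + assert (Hpos : (0 < Rceil P)%Z).
      { apply lt_IZR. apply Rlt_le_trans with P; [|exact Hge].
        rewrite HP. apply Rmult_lt_0_compat; [apply Rinv_0_lt_compat; lra|].
        apply ln_pos. assert (0 < w / eta * a) by
          (apply Rmult_lt_0_compat; [apply Rdiv_lt_0_compat|]; lra). lra. }
      assert (Hk : (Z.abs (Rceil P - 1) <= Z.abs (Rceil P))%Z) by lia.
      apply IZR_le in Hk. lra.
    + destruct (Z.eq_dec k (Rceil P)) as [-> | _]; lra.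
Qed.

Lemma prob_index_envelope (eta w xi : R) (k : Z) :
  0 < eta -> 0 < w -> 0 < prob_index eta w xi k ->
  IZR (Z.abs k) + 1 <= envelope 2 (/ (2 * ln (sqrt (1 + w ^ 2) + w))) (w / eta) (Rabs xi).
Proof.
  intros Heta Hw Hp. unfold prob_index in Hp. destruct (Rlt_dec xi 0).
  - rewrite Rabs_left by assumption. replace (Z.abs k) with (Z.abs (- k)) by lia.
    apply prob_pos_envelope; auto; lra.
  - rewrite Rabs_right by lra. apply prob_pos_envelope; auto; lra.
Qed.

Theorem lemma3 (eta w : R) (S : Z) (d : nat) (x : nat -> R)
  (Heta : 0 < eta) (Hw0 : 0 < w) (Hw1 : w < 1) (HS : (2 <= S)%Z) (Hd : (0 < d)%nat) :
  (* (i) deterministic ANQ *)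
  det_cost eta w S d x <=
    3 * INR d * log2 (IZR S + 1)
    + INR d * log2 (IZR S + 1) *
      logb (IZR S) (2 + (ln (1 - w) + ln (1 + w * norm2 d x / (sqrt (INR d) * eta)))
                         / (ln (1 + w) - ln (1 - w)))
  /\
  (* (ii) probabilistic ANQ, almost surely: for every index vector that occurs with
     positive probability in each component *)
  (forall ks : nat -> Z,
     (forall i, (i < d)%nat -> 0 < prob_index eta w (x i) (ks i)) ->
     vec_cost S d ks <=
       3 * INR d * log2 (IZR S + 1)
       + INR d * log2 (IZR S + 1) *
         logb (IZR S) (2 + ln (1 + w * norm2 d x / (sqrt (INR d) * eta))
                            / (2 * ln (sqrt (1 + w ^ 2) + w)))).
Proof.
  assert (Hw : 0 < w < 1) by lra.
  assert (Hsd : 0 < sqrt (INR d)) by (apply sqrt_lt_R0, lt_0_INR; lia).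
  assert (Hscale : w * norm2 d x / (sqrt (INR d) * eta) = w / eta * (norm2 d x / sqrt (INR d)))
    by (field; lra).
  assert (Hb : 0 <= w / eta) by (apply Rdiv_le_0_compat; lra).
  rewrite Hscale. split.
  - pose proof (det_growth_pos w Hw) as HD. pose proof (det_offset_pos w Hw).
    set (D := ln (1 + w) - ln (1 - w)) in *.
    replace (2 + (ln (1 - w) + ln (1 + w / eta * (norm2 d x / sqrt (INR d)))) / D)
      with (envelope (2 + ln (1 - w) / D) (/ D) (w / eta) (norm2 d x / sqrt (INR d)))
      by (unfold envelope; field; lra).
    apply vec_cost_le; [exact HS | exact Hd | lra | left; now apply Rinv_0_lt_compat
                       | exact Hb | intros i _; now apply det_index_envelope].
  - intros ks Hks. pose proof (prob_growth_pos w Hw0) as Hq.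
    replace (2 + ln (1 + w / eta * (norm2 d x / sqrt (INR d))) / (2 * ln (sqrt (1 + w ^ 2) + w)))
      with (envelope 2 (/ (2 * ln (sqrt (1 + w ^ 2) + w))) (w / eta) (norm2 d x / sqrt (INR d)))
      by (unfold envelope; field; lra).
    apply vec_cost_le; [exact HS | exact Hd | lra | left; apply Rinv_0_lt_compat; lra
                       | exact Hb | intros i Hi; now apply prob_index_envelope, Hks].
Qed.
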